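(* Let $Z\subseteq\{0,1\}^n$. For $\bm\alpha\in\mathbb R^n$ let $$C(\bm\alpha)=\Big\{(\bm x,\bm z)\in\mathbb R^n\times\operatorname{conv}(Z):\ \sum_{i=1}^n|\alpha_ix_i|\le\sqrt{\textstyle\sum_{i=1}^n\alpha_i^2z_i}\Big\},\qquad \bar C=\bigcap_{\bm\alpha\in\mathbb R^n}C(\bm\alpha).$$ Then $\bar C=R_{\mathrm{persp}}$, where $$R_{\mathrm{persp}}=\Big\{(\bm x,\bm z)\in\mathbb R^n\times\operatorname{conv}(Z):\ \sum_{i=1}^n\frac{x_i^2}{z_i}\le1\Big\}.$$
   Context: Division convention: $a/b=0$ if $a=b=0$, and $a/b=+\infty$ if $b=0$ and $a\neq0$ (so $x_i^2/z_i=+\infty$ when $z_i=0\ne x_i$). $\operatorname{conv}$ denotes the convex hull. *)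

From HB Require Import structures.
From mathcomp Require Import all_boot all_order all_algebra.
From mathcomp Require Import all_classical all_reals.
From mathcomp Require Import ereal.
Set Implicit Arguments. Unset Strict Implicit. Unset Printing Implicit Defensive.
Import Order.TTheory GRing.Theory Num.Theory.
Local Open Scope classical_set_scope.
Local Open Scope ring_scope.

Section Defs.
Variables (R : realType) (n : nat).

(* Points of {0,1}^n are boolean vectors; their real coordinates are (v i)%:R. *)
Definition cube := {ffun 'I_n -> bool}.

Definition convZ (Z : {set cube}) : set ('I_n -> R) :=
  [set z | exists lam : cube -> R,
     [/\ (forall v, 0 <= lam v),
         (forall v, v \notin Z -> lam v = 0),
         \sum_(v : cube) lam v = 1 &
         forall i, z i = \sum_(v : cube) lam v * (v i)%:R]].

Definition Calpha (Z : {set cube}) (alpha : 'I_n -> R)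
  : set (('I_n -> R) * ('I_n -> R)) :=
  [set p | convZ Z p.2 /\
     \sum_(i < n) `|alpha i * p.1 i| <= Num.sqrt (\sum_(i < n) alpha i ^+ 2 * p.2 i)].

Definition Cbar (Z : {set cube}) : set (('I_n -> R) * ('I_n -> R)) :=
  \bigcap_(alpha in [set: 'I_n -> R]) Calpha Z alpha.

(* x^2/z with the convention a/0 = 0 if a = 0 and +oo otherwise. *)
Definition persp_term (x z : R) : \bar R :=
  if z == 0 then (if x == 0 then 0%E else +oo%E) else (x ^+ 2 / z)%:E.

Definition Rpersp (Z : {set cube}) : set (('I_n -> R) * ('I_n -> R)) :=
  [set p | convZ Z p.2 /\
     (\sum_(i < n) persp_term (p.1 i) (p.2 i) <= 1%E)%E].

End Defs.

From mathcomp Require Import all_boot all_order all_algebra.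
From mathcomp Require Import all_classical all_reals.
From mathcomp Require Import ereal ring lra.
Import Order.TTheory GRing.Theory Num.Theory.
Local Open Scope ring_scope.
Set Implicit Arguments. Unset Strict Implicit.

(* For (x, z) in R_persp and any alpha, put s = sqrt (sum alpha_i^2 z_i); the
   weighted AM-GM inequality 2 s |alpha_i x_i| <= alpha_i^2 z_i + s^2 x_i^2 / z_i
   summed over i gives sum |alpha_i x_i| <= s, i.e. (x, z) lies in C(alpha).
   Conversely, testing C(alpha) with alpha = e_i forces x_i = 0 whenever
   z_i = 0, and testing it with alpha_i = x_i / z_i gives T <= sqrt T for
   T = sum x_i^2 / z_i, hence T <= 1. *)

Section Perspective.
Variable R : realType.

(* In a field [x / 0 = 0], so [x ^+ 2 / z] is the finite part of [persp_term x z]. *)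
Lemma persp_termE (x z : R) : (z = 0 -> x = 0) -> persp_term x z = (x ^+ 2 / z)%:E.
Proof.
rewrite /persp_term; case: eqP => [-> /(_ erefl) ->|//].
by rewrite eqxx expr0n mul0r.
Qed.

Lemma persp_term_ge0 (x z : R) : 0 <= z -> (0 <= persp_term x z)%E.
Proof.
move=> z_ge0; rewrite /persp_term; case: (z == 0); first by case: (x == 0).
by rewrite lee_fin divr_ge0 // sqr_ge0.
Qed.

Lemma sqr_div_ge0 (x z : R) : 0 <= z -> 0 <= x ^+ 2 / z.
Proof. by move=> z_ge0; rewrite divr_ge0 // sqr_ge0. Qed.

Lemma sqr_div_amgm (a x z s : R) : 0 <= z -> (z = 0 -> x = 0) ->
  2 * s * `|a * x| <= a ^+ 2 * z + s ^+ 2 * (x ^+ 2 / z).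
Proof.
move=> z_ge0 zx; have [z0|z_neq0] := eqVneq z 0.
  by rewrite (zx z0) z0 !(mulr0, mul0r, normr0, addr0, expr0n).
have z_gt0 : 0 < z by rewrite lt_neqAle eq_sym z_neq0.
rewrite -(ler_pM2r z_gt0).
have -> : (a ^+ 2 * z + s ^+ 2 * (x ^+ 2 / z)) * z = a ^+ 2 * z ^+ 2 + s ^+ 2 * x ^+ 2.
  by field.
have := sqr_ge0 (`|a| * z - s * `|x|).
rewrite normrM -[a ^+ 2]real_normK ?num_real // -[x ^+ 2]real_normK ?num_real //.
nra.
Qed.

Lemma le_sqrtr_le1 (t : R) : t <= Num.sqrt t -> t <= 1.
Proof.
have [t_le0|t_gt0] := leP t 0; first by move=> _; exact: le_trans t_le0 _.
by have := sqr_sqrtr (ltW t_gt0); have := sqrtr_ge0 t; nra.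
Qed.

Variable n : nat.
Implicit Types (a x z : 'I_n -> R).

Lemma convZ_ge0 (Z : {set cube n}) z : convZ Z z -> forall i, 0 <= z i.
Proof.
move=> [lam [lam_ge0 _ _ zE]] i; rewrite zE.
by apply: sumr_ge0 => v _; apply: mulr_ge0.
Qed.

Lemma sum_persp_term_le1P x z : (forall i, 0 <= z i) ->
  (\sum_(i < n) persp_term (x i) (z i) <= 1)%E <->
  (forall i, z i = 0 -> x i = 0) /\ \sum_(i < n) x i ^+ 2 / z i <= 1.
Proof.
move=> z_ge0; have [zx|] := pselect (forall i, z i = 0 -> x i = 0).
  rewrite (eq_bigr (fun i => (x i ^+ 2 / z i)%:E)) => [|i _]; last exact: persp_termE (zx i).
  by rewrite sumEFin lee_fin; split => // -[].
move=> /existsNP[i /not_implyP[zi0 /eqP xi_neq0]].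
split=> [|[zx _]]; last by case/eqP: xi_neq0; exact: zx.
rewrite (bigD1 i) //= {1}/persp_term zi0 eqxx (negbTE xi_neq0).
rewrite addye ?leye_eq // gt_eqF // (lt_le_trans _ (sume_ge0 _ _)) //.
by move=> j _; exact: persp_term_ge0.
Qed.

Lemma sum_abs_le_sqrt a x z : (forall i, 0 <= z i) ->
  (forall i, z i = 0 -> x i = 0) -> \sum_(i < n) x i ^+ 2 / z i <= 1 ->
  \sum_(i < n) `|a i * x i| <= Num.sqrt (\sum_(i < n) a i ^+ 2 * z i).
Proof.
move=> z_ge0 zx T_le1.
set A := \sum_(i < n) a i ^+ 2 * z i; set s := Num.sqrt A.
set L := \sum_(i < n) `|a i * x i|.
have A_ge0 : 0 <= A by apply: sumr_ge0 => i _; rewrite mulr_ge0 ?sqr_ge0.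
have s2 : s ^+ 2 = A by exact: sqr_sqrtr.
have [s0|s_neq0] := eqVneq s 0.
  have A0 : A = 0 by rewrite -s2 s0 expr0n.
  rewrite s0 /L big1 // => i _.
  have := psumr_eq0P (fun i _ => mulr_ge0 (sqr_ge0 (a i)) (z_ge0 i)) A0 (i := i) isT.
  move/eqP; rewrite mulf_eq0 sqrf_eq0 => /orP[/eqP->|/eqP/zx->]; last by rewrite mulr0 normr0.
  by rewrite mul0r normr0.
have s_gt0 : 0 < s by rewrite lt_neqAle eq_sym s_neq0 sqrtr_ge0.
have sum_amgm : 2 * s * L <= A + s ^+ 2 * \sum_(i < n) x i ^+ 2 / z i.
  rewrite mulr_sumr mulr_sumr -big_split /=.
  by apply: ler_sum => i _; exact: sqr_div_amgm (z_ge0 i) (zx i).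
have L_ge0 : 0 <= L by apply: sumr_ge0.
rewrite -s2 in sum_amgm; nra.
Qed.

Lemma Calpha_unit_support (Z : {set cube n}) x z i :
  Calpha Z (fun j => (j == i)%:R) (x, z) -> z i = 0 -> x i = 0.
Proof.
move=> [_ /=] + zi0.
rewrite (bigD1 i) //= big1 => [|j /negbTE ->]; last by rewrite mul0r normr0.
rewrite (bigD1 i) //= big1 => [|j /negbTE ->]; last by rewrite expr0n mul0r.
by rewrite eqxx mul1r !addr0 zi0 mulr0 sqrtr0 normr_le0 => /eqP.
Qed.

Lemma Calpha_ratio_le1 (Z : {set cube n}) x z : (forall i, 0 <= z i) ->
  Calpha Z (fun i => x i / z i) (x, z) -> \sum_(i < n) x i ^+ 2 / z i <= 1.
Proof.
move=> z_ge0 [_ /=].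
have abs_ratio i : `|x i / z i * x i| = x i ^+ 2 / z i.
  by rewrite mulrAC -expr2 ger0_norm // sqr_div_ge0 // z_ge0.
have sqr_ratio i : (x i / z i) ^+ 2 * z i = x i ^+ 2 / z i.
  have [->|z_neq0] := eqVneq (z i) 0; first by rewrite !(invr0, mulr0).
  by field.
rewrite (eq_bigr _ (fun i _ => abs_ratio i)) (eq_bigr _ (fun i _ => sqr_ratio i)).
exact: le_sqrtr_le1.
Qed.

End Perspective.

Theorem proposition5 (R : realType) (n : nat) (Z : {set cube n}) :
  @Cbar R n Z = @Rpersp R n Z.
Proof.
apply/seteqP; split => -[x z] /=.
- move=> inCbar; have [zZ _] : Calpha Z (fun _ => 0) (x, z) by exact: inCbar.
  have z_ge0 := convZ_ge0 zZ.
  split=> //; apply/sum_persp_term_le1P => //; split.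
  + by move=> i; apply: Calpha_unit_support; exact: inCbar.
  + by apply: Calpha_ratio_le1 => //; exact: inCbar.
- move=> [zZ]; have z_ge0 := convZ_ge0 zZ.
  move=> /(sum_persp_term_le1P _ z_ge0) [zx T_le1] a _.
  by split=> //; exact: sum_abs_le_sqrt.
Qed.
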